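(* Let $\bowtie$ be a balanced coloring of a network $\mathcal{G}$. Then for any choice of node spaces there exists a $\mathcal{G}$-admissible map $f$ such that the ODE $\dot x=f(x)$ has a linearly stable equilibrium with synchrony pattern $\bowtie$.
   Context: A network $\mathcal{G}$ has a finite set of nodes $\mathcal{C}$, each with a node type, and a finite set of arrows, each with an arrow type, a head and a tail; the input set $I(c)$ of node $c$ is the set of arrows with head $c$. Nodes $c,d$ are input equivalent if they have the same node type and there is an arrow-type-preserving bijection $I(c)\to I(d)$. Each node $c$ has a node space $P_c$ (a finite-dimensional real vector space), with $P_c=P_d$ when $c,d$ are input equivalent, and the phase space is $P=\prod_c P_c$. A map $f=(f_c):P\to P$ is $\mathcal{G}$-admissible if each $f_c(x)$ depends only on $x_c$ and the tail variables $x_{t(a)}$, $a\in I(c)$, via a function that is invariant under permutations of inputs preserving arrow type, and input-equivalent nodes use the same function (after identifying inputs by an arrow-type-preserving bijection). A coloring (equivalence relation) $\bowtie$ of the nodes is balanced if same-colored nodes $c,d$ are input equivalent via a bijection $\beta:I(c)\to I(d)$ such that the tails of $a$ and $\beta(a)$ have the same color for every $a$. An equilibrium $y$ has synchrony pattern $\bowtie$ if $y_c=y_d$ exactly when $c,d$ have the same color. It is linearly stable if all eigenvalues of the Jacobian at $y$ have negative real part. *)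

From HB Require Import structures.
From mathcomp Require Import all_boot all_order all_algebra.
From mathcomp Require Import complex.
From mathcomp Require Import all_classical all_reals all_analysis.
Set Implicit Arguments. Unset Strict Implicit. Unset Printing Implicit Defensive.
Import Order.TTheory GRing.Theory Num.Theory.
Local Open Scope ring_scope.

Record network := Network {
  node : finType;
  arrow : finType;
  ntype : node -> nat;
  atype : arrow -> nat;
  head : arrow -> node;
  tail : arrow -> node }.

Section Net.
Variable G : network.

(* b restricted to I(c) is an arrow-type-preserving bijection I(c) -> I(d). *)
Definition input_bij (c d : node G) (b : arrow G -> arrow G) : Prop :=
  (forall a, head a = c -> head (b a) = d /\ atype (b a) = atype a) /\
  (forall a1 a2, head a1 = c -> head a2 = c -> b a1 = b a2 -> a1 = a2) /\
  (forall a', head a' = d -> exists a, head a = c /\ b a = a').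

Definition input_equiv (c d : node G) : Prop :=
  ntype c = ntype d /\ exists b, input_bij c d b.

(* A coloring is given by a color map; same color = same value. *)
Definition balanced (col : node G -> nat) : Prop :=
  forall c d, col c = col d ->
    ntype c = ntype d /\
    exists b, input_bij c d b /\
      forall a, head a = c -> col (tail a) = col (tail (b a)).

(* Node spaces P_c = R^(dim c); the phase space P = prod_c P_c is flattened
   into row vectors indexed by the finite type of coordinates (c, i). *)
Definition coord (dim : node G -> nat) := {c : node G & 'I_(dim c)}.
Definition pdim (dim : node G -> nat) := #|{: coord dim}|.

Section Space.
Variables (R : realType) (dim : node G -> nat).
Local Notation P := 'rV[R]_(pdim dim).

Definition nodeval (x : P) (c : node G) : seq R :=
  [seq x ord0 (enum_rank (existT (fun c => 'I_(dim c)) c i)) | i <- enum 'I_(dim c)].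

(* G-admissibility (differentiability added so that the Jacobian exists). *)
Definition admissible (f : P -> P) : Prop :=
  (forall x, differentiable f x) /\
  (forall c x x', nodeval x c = nodeval x' c ->
     (forall a, head a = c -> nodeval x (tail a) = nodeval x' (tail a)) ->
     nodeval (f x) c = nodeval (f x') c) /\
  (* invariance under input permutations (c = d) and same function for
     input-equivalent nodes, after identifying inputs via b *)
  (forall c d b, ntype c = ntype d -> input_bij c d b ->
     forall x x', nodeval x c = nodeval x' d ->
     (forall a, head a = c -> nodeval x (tail a) = nodeval x' (tail (b a))) ->
     nodeval (f x) c = nodeval (f x') d).

Definition equilibrium (f : P -> P) (y : P) : Prop := f y = 0.

Definition has_synchrony_pattern (col : node G -> nat) (y : P) : Prop :=
  forall c d, nodeval y c = nodeval y d <-> col c = col d.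

Definition linearly_stable (f : P -> P) (y : P) : Prop :=
  forall z : R[i], eigenvalue (map_mx (fun r : R => (r%:C)%C) ('J f y)) z ->
    complex.Re z < 0.
End Space.
End Net.

From HB Require Import structures.
From mathcomp Require Import all_boot all_order all_algebra.
From mathcomp Require Import complex.
From mathcomp Require Import all_classical all_reals all_analysis.
Import Order.TTheory GRing.Theory Num.Theory.
Import numFieldNormedType.Exports.
Local Open Scope ring_scope.

(* Uncoupled dynamics suffice.  Let every coordinate evolve by x' = sin x: this
   map ignores all inputs and is the same at every node, so it is admissible.
   Any point whose coordinates are odd multiples of pi is an equilibrium at
   which the Jacobian is diag(cos) = -1, hence linearly stable.  Giving the
   nodes of color k all coordinates equal to (2k+1)pi realises exactly the
   synchrony pattern: distinct colors get distinct values, and same-colored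
   nodes of a balanced coloring are input equivalent, so they have node spaces
   of the same dimension and their components coincide. *)

Section CoordinatewiseMap.
Context {R : realType} {n : nat}.

Definition row_coord (j : 'I_n) (x : 'rV[R]_n) : R := x ord0 j.

Lemma row_coord_is_linear j : linear (row_coord j).
Proof. by move=> a u v; rewrite /row_coord !mxE. Qed.

HB.instance Definition _ j :=
  GRing.isLinear.Build _ _ _ _ (row_coord j) (row_coord_is_linear j).

Global Instance is_diff_row_coord j (x : 'rV[R]_n) :
  is_diff x (row_coord j) (row_coord j).
Proof.
apply: DiffDef; first exact/linear_differentiable/coord_continuous.
by rewrite diff_lin //; apply: coord_continuous.
Qed.

Lemma is_diff_derive {g : R -> R} {t dg : R} :
  is_derive t 1 g dg -> is_diff t g ( *:%R^~ dg).
Proof.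
move=> gt; have gder : derivable g t 1 by [].
apply: DiffDef; first exact/derivable1_diffP.
by rewrite deriv1E // derive1E derive_val.
Qed.

Context {g g' : R -> R}.
Hypothesis g_deriv : forall t : R, is_derive t 1 g (g' t).

Lemma map_row_sum_delta :
  map_mx g = \sum_(j < n) (fun x => g (row_coord j x) *: 'e_j).
Proof.
apply/funext => x; apply/rowP => k; rewrite fct_sumE summxE (bigD1 k) //= big1 ?addr0.
  by rewrite !mxE !eqxx mulr1.
by move=> j /negPf jk; rewrite !mxE (eq_sym k) jk andbF mulr0.
Qed.

Lemma is_diff_map_row (x : 'rV[R]_n) :
  is_diff x (map_mx g) (fun h : 'rV[R]_n => h *m diag_mx (map_mx g' x)).
Proof.
rewrite map_row_sum_delta; apply: is_diff_eq.
  apply: (big_ind2 (fun f df => is_diff x f df)) => [|f1 f2 d1 d2 h1 h2|j _].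
  - exact: is_diff_cst.
  - exact: is_diffD.
  - exact: is_diff_comp (is_diff_comp (is_diff_row_coord j x)
      (is_diff_derive (g_deriv _))) (is_diff_scalel _ ('e_j : 'rV[R]_n)).
apply/funext => h; apply/rowP => k.
rewrite fct_sumE summxE (bigD1 k) //= big1 ?addr0.
  by rewrite mul_mx_diag !mxE !eqxx mulr1.
by move=> j /negPf jk; rewrite !mxE (eq_sym k) jk andbF mulr0.
Qed.

Lemma differentiable_map_row (x : 'rV[R]_n) : differentiable (map_mx g) x.
Proof. by have [] := is_diff_map_row x. Qed.

Lemma jacobian_map_row (x : 'rV[R]_n) : 'J (map_mx g) x = diag_mx (map_mx g' x).
Proof.
rewrite /jacobian (@diff_val _ _ _ _ _ _ _ (is_diff_map_row x)).
by apply/matrixP => i j; rewrite mxE -rowE mxE.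
Qed.

End CoordinatewiseMap.

Lemma eigenvalue_scalar_mx (F : fieldType) (n : nat) (a z : F) :
  eigenvalue (a%:M : 'M[F]_n) z -> z = a.
Proof.
case/eigenvalueP=> v /eqP; rewrite mul_mx_scalar -subr_eq0 -scalerBl scaler_eq0.
by rewrite subr_eq0 => /orP[/eqP -> | /eqP ->]; rewrite ?eqxx.
Qed.

Section NetworkRealisation.
Context {R : realType} {G : network} {dim : node G -> nat}.
Local Notation P := 'rV[R]_(pdim dim).

Lemma linearly_stable_scalar_jacobian (f : P -> P) (y : P) (a : R) :
  'J f y = a%:M -> a < 0 -> linearly_stable f y.
Proof.
by move=> Jfy a_lt0 z; rewrite Jfy map_scalar_mx => /eigenvalue_scalar_mx ->.
Qed.

Lemma nodeval_map_mx (g : R -> R) (x : P) c :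
  nodeval (map_mx g x) c = map g (nodeval x c).
Proof. by rewrite /nodeval -map_comp; apply: eq_map => i /=; rewrite mxE. Qed.

Lemma admissible_map_mx {g g' : R -> R} :
  (forall t : R, is_derive t 1 g (g' t)) -> admissible (map_mx g : P -> P).
Proof.
move=> g_deriv; split; first exact: differentiable_map_row.
split=> [c x x' xc _ | c d b _ _ x x' xcd _]; by rewrite !nodeval_map_mx ?xc ?xcd.
Qed.

Definition node_const_row (h : node G -> R) : P := \row_k h (tag (enum_val k)).

Lemma nodeval_node_const_row h c : nodeval (node_const_row h) c = nseq (dim c) (h c).
Proof.
rewrite /nodeval (eq_map (g := fun=> h c)); last by move=> i; rewrite mxE enum_rankK.
by rewrite -[in RHS](size_enum_ord (dim c)); elim: (enum _) => //= ? ? ->.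
Qed.

Lemma balanced_input_equiv {col : node G -> nat} {c d} :
  balanced col -> col c = col d -> input_equiv c d.
Proof. by move=> bal /bal [ntype_cd [b [bij _]]]; split=> //; exists b. Qed.

Lemma synchrony_node_const_row (col : node G -> nat) (v : nat -> R) :
  (forall c, (0 < dim c)%N) -> (forall c d, input_equiv c d -> dim c = dim d) ->
  balanced col -> injective v -> has_synchrony_pattern col (node_const_row (v \o col)).
Proof.
move=> dim_gt0 dim_equiv bal v_inj c d; rewrite !nodeval_node_const_row; split.
  by case: (dim c) (dim_gt0 c) => // ? _; case: (dim d) (dim_gt0 d) => // ? _ [/v_inj].
by move=> col_cd; rewrite (dim_equiv c d (balanced_input_equiv bal col_cd)) /= col_cd.
Qed.

End NetworkRealisation.

Section OddMultiplesOfPi.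
Variable R : realType.

Definition odd_pi (m : nat) : R := pi + pi *+ 2 *+ m.

Lemma sin_odd_pi m : sin (odd_pi m) = 0.
Proof. by rewrite /odd_pi (periodicn (@sinD2pi R)) sinpi. Qed.

Lemma cos_odd_pi m : cos (odd_pi m) = -1.
Proof. by rewrite /odd_pi (periodicn (@cosD2pi R)) cospi. Qed.

Lemma odd_pi_inj : injective odd_pi.
Proof.
move=> a b /addrI /eqP; rewrite -(mulr_natr (pi *+ 2) a) -(mulr_natr (pi *+ 2) b).
rewrite (inj_eq (mulfI _)) ?eqr_nat => [/eqP //|].
by rewrite mulrn_eq0 /= gt_eqF // pi_gt0.
Qed.

End OddMultiplesOfPi.

Theorem theorem11p1 (R : realType) (G : network) (col : node G -> nat)
  (dim : node G -> nat)
  (hdim_pos : forall c, (0 < dim c)%N)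
  (hdim_eq : forall c d, input_equiv c d -> dim c = dim d) :
  balanced col ->
  exists (f : 'rV[R]_(pdim dim) -> 'rV[R]_(pdim dim)) (y : 'rV[R]_(pdim dim)),
    admissible f /\ equilibrium f y /\ has_synchrony_pattern col y /\
    linearly_stable f y.
Proof.
move=> bal; pose y : 'rV[R]_(pdim dim) := node_const_row (odd_pi R \o col).
exists (map_mx (@sin R)), y; split; [|split; [|split]].
- exact: (admissible_map_mx (g' := cos) (@is_derive_sin R)).
- by apply/rowP => k; rewrite !mxE sin_odd_pi.
- exact: synchrony_node_const_row hdim_pos hdim_eq bal (odd_pi_inj R).
- apply: (linearly_stable_scalar_jacobian _ _ (-1)); last exact: ltrN10.
  rewrite (jacobian_map_row (g' := cos) (@is_derive_sin R)) -diag_const_mx.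
  by congr diag_mx; apply/rowP => k; rewrite !mxE cos_odd_pi.
Qed.
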